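(* Under the standing assumptions, let $\alpha^*(\eta)=\sup\{\theta\cdot\eta-\alpha(\theta):\theta\in\mathbb{R}^m\}$, $\eta\in\mathbb{R}^m$, be the convex conjugate of $\alpha$. Then $\alpha^*(\eta)<+\infty$ if and only if $\eta\in M$, where $M=\operatorname{conv}\{H(x):x\in\mathcal{X}\}\subset\mathbb{R}^m$ is the marginal polytope.
   Context: Standing assumptions. $\mathcal{X}$ is a finite set with a reference measure $\mu$ satisfying $\mu(x)>0$ for all $x$. $p:\mathcal{X}\to(0,\infty)$ is a strictly positive probability density w.r.t. $\mu$, i.e. $\sum_x p(x)\mu(x)=1$, and $\mathbb{E}_p[f]=\sum_x f(x)p(x)\mu(x)$. $\phi:(0,\infty)\to(0,\infty)$ is a positive, strictly increasing, absolutely continuous function with $\int_0^1 dy/\phi(y)=\int_1^{\infty}dy/\phi(y)=+\infty$. The $\phi$-logarithm is $\ln_\phi(v)=\int_1^v dy/\phi(y)$, $v>0$; it is a strictly increasing concave bijection $(0,\infty)\to\mathbb{R}$, and the $\phi$-exponential $\exp_\phi=\ln_\phi^{-1}:\mathbb{R}\to(0,\infty)$ is increasing, convex, differentiable, with $\exp_\phi'(u)=\phi(\exp_\phi(u))$, $\exp_\phi(0)=1$. Let $H=(H_1,\dots,H_m):\mathcal{X}\to\mathbb{R}^m$ be given statistics. For $\theta\in\mathbb{R}^m$, $\alpha(\theta)$ is the unique real number such that $\sum_x \exp_\phi(\theta\cdot H(x)-\alpha(\theta))\,p(x)\mu(x)=1$ (it exists and is unique since $a\mapsto\mathbb{E}_p[\exp_\phi(\theta\cdot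 H-a)]$ is continuous and strictly decreasing from $+\infty$ to $0$); the $\phi$-exponential family is $p_\theta=\exp_\phi(\theta\cdot H-\alpha(\theta))\,p$. The function $\alpha$ is convex. *)

From Stdlib Require Import Reals Lra List ClassicalEpsilon.
Open Scope R_scope.

Fixpoint fsum (n : nat) (f : nat -> R) : R :=
  match n with
  | O => 0
  | S k => fsum k f + f k
  end.

(* dot product on R^m, vectors represented as nat -> R (indices 0..m-1) *)
Definition dot (m : nat) (a b : nat -> R) : R := fsum m (fun i => a i * b i).

(* Riemann integral of f from a to b (oriented), defined when f is
   Riemann integrable on [a,b]; it does not depend on the integrability proof. *)
Definition integral (f : R -> R) (a b : R) : R :=
  epsilon (inhabits 0)
    (fun I => exists pr : Riemann_integrable f a b, RiemannInt pr = I).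

Fixpoint ordered_intervals (l : list (R * R)) : Prop :=
  match l with
  | nil => True
  | Iv :: l' => fst Iv <= snd Iv /\
      match l' with
      | nil => True
      | J :: _ => snd Iv <= fst J
      end /\ ordered_intervals l'
  end.

Definition abs_continuous_on (f : R -> R) (a b : R) : Prop :=
  forall eps, 0 < eps -> exists delta, 0 < delta /\
    forall l : list (R * R),
      ordered_intervals l ->
      (forall Iv, In Iv l -> a <= fst Iv /\ snd Iv <= b) ->
      fold_right (fun Iv s => (snd Iv - fst Iv) + s) 0 l < delta ->
      fold_right (fun Iv s => Rabs (f (snd Iv) - f (fst Iv)) + s) 0 l < eps.

Definition admissible_phi (phi : R -> R) : Prop :=
  (forall y, 0 < y -> 0 < phi y) /\
  (forall y z, 0 < y -> y < z -> phi y < phi z) /\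
  (forall a b, 0 < a -> a <= b -> abs_continuous_on phi a b) /\
  (* int_0^1 dy/phi(y) = +oo *)
  (forall B, exists v, 0 < v /\ v < 1 /\ integral (fun y => / phi y) v 1 > B) /\
  (* int_1^oo dy/phi(y) = +oo *)
  (forall B, exists v, 1 < v /\ integral (fun y => / phi y) 1 v > B).

Definition ln_phi (phi : R -> R) (v : R) : R := integral (fun y => / phi y) 1 v.

Definition exp_phi (phi : R -> R) (u : R) : R :=
  epsilon (inhabits 1) (fun v => 0 < v /\ ln_phi phi v = u).

(* X = {0,...,N-1}; E_p[f] = sum_x f(x) p(x) mu(x) *)
Definition expect (N : nat) (p mu : nat -> R) (f : nat -> R) : R :=
  fsum N (fun x => f x * p x * mu x).

Definition alpha (phi : R -> R) (N m : nat) (p mu : nat -> R)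
    (H : nat -> nat -> R) (theta : nat -> R) : R :=
  epsilon (inhabits 0)
    (fun a => expect N p mu (fun x => exp_phi phi (dot m theta (H x) - a)) = 1).

Definition in_marginal_polytope (N m : nat) (H : nat -> nat -> R) (eta : nat -> R)
  : Prop :=
  exists lam : nat -> R,
    (forall x, (x < N)%nat -> 0 <= lam x) /\
    fsum N lam = 1 /\
    forall i, (i < m)%nat -> eta i = fsum N (fun x => lam x * H x i).

(* - If eta = sum_x lam_x H(x) lies in M, then theta.eta - alpha(theta) is a
     convex combination of the "scores" theta.H(x) - alpha(theta).  Each score
     is at most ln_phi(1/(p(x) mu(x))), because the single term
     exp_phi(score) p(x) mu(x) of the normalisation sum is at most 1.
   - If eta is not in M, Gordan's theorem of the alternative yields theta
     with theta.(H(x) - eta) < 0 for every x.  Since some score is always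
     nonnegative (otherwise the normalisation sum would be < 1),
     (t theta).eta - alpha(t theta) >= t min_x theta.(eta - H(x)) -> +oo. *)

From Stdlib Require Import Reals Lra Lia List Classical ClassicalEpsilon.
Open Scope R_scope.

Lemma fsum_ext n f g : (forall x, (x < n)%nat -> f x = g x) -> fsum n f = fsum n g.
Proof. induction n as [|n IH]; simpl; intros Hfg; auto. rewrite IH, Hfg; auto. Qed.

Lemma fsum_plus n f g : fsum n (fun x => f x + g x) = fsum n f + fsum n g.
Proof. induction n as [|n IH]; simpl; [lra|]. rewrite IH; lra. Qed.

Lemma fsum_scal n c f : fsum n (fun x => c * f x) = c * fsum n f.
Proof. induction n as [|n IH]; simpl; [lra|]. rewrite IH; lra. Qed.

Lemma fsum_zero n : fsum n (fun _ => 0) = 0.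
Proof. induction n as [|n IH]; simpl; [|rewrite IH]; lra. Qed.

Lemma fsum_le n f g : (forall x, (x < n)%nat -> f x <= g x) -> fsum n f <= fsum n g.
Proof.
  induction n as [|n IH]; simpl; intros Hfg; [lra|].
  assert (f n <= g n) by auto. assert (fsum n f <= fsum n g) by auto. lra.
Qed.

Lemma fsum_lt n f g :
  (0 < n)%nat -> (forall x, (x < n)%nat -> f x < g x) -> fsum n f < fsum n g.
Proof.
  induction n as [|n IH]; simpl; intros Hn Hfg; [lia|].
  assert (f n < g n) by auto.
  destruct n as [|n]; [simpl; lra|].
  assert (fsum (S n) f < fsum (S n) g) by (apply IH; auto; lia). lra.
Qed.

Lemma fsum_nonneg n f : (forall y, (y < n)%nat -> 0 <= f y) -> 0 <= fsum n f.
Proof. intros Hf. rewrite <- (fsum_zero n). apply fsum_le; auto. Qed.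

Lemma fsum_term n f x :
  (forall y, (y < n)%nat -> 0 <= f y) -> (x < n)%nat -> f x <= fsum n f.
Proof.
  induction n as [|n IH]; simpl; intros Hf Hx; [lia|].
  destruct (Nat.eq_dec x n) as [->|Hne].
  - assert (0 <= fsum n f) by (apply fsum_nonneg; intros; apply Hf; lia). lra.
  - assert (f x <= fsum n f) by (apply IH; intros; try apply Hf; lia).
    assert (0 <= f n) by (apply Hf; lia). lra.
Qed.

Lemma fsum_swap n k f :
  fsum n (fun i => fsum k (fun x => f x i)) = fsum k (fun x => fsum n (fun i => f x i)).
Proof.
  induction n as [|n IH]; simpl.
  - symmetry; apply fsum_zero.
  - rewrite IH, <- fsum_plus. reflexivity.
Qed.

Lemma fsum_delta N x0 c f : (x0 < N)%nat ->
  fsum N (fun x => (if Nat.eq_dec x x0 then c else 0) * f x) = c * f x0.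
Proof.
  induction N as [|N IH]; simpl; intros Hx0; [lia|].
  destruct (Nat.eq_dec N x0) as [<-|Hne].
  - rewrite (fsum_ext _ _ (fun _ => 0)), fsum_zero; [ring|].
    intros x Hx; destruct (Nat.eq_dec x N); [lia|ring].
  - rewrite IH by lia. ring.
Qed.

Lemma finite_argmin n (f : nat -> R) : (0 < n)%nat ->
  exists x, (x < n)%nat /\ forall y, (y < n)%nat -> f x <= f y.
Proof.
  induction n as [|n IH]; intros Hn; [lia|]. destruct n as [|n].
  - exists 0%nat; split; [lia|]; intros y Hy; replace y with 0%nat by lia; lra.
  - destruct IH as [x [Hx Hmin]]; [lia|].
    destruct (Rle_dec (f x) (f (S n))).
    + exists x; split; [lia|]; intros y Hy.
      destruct (Nat.eq_dec y (S n)) as [->|]; [lra|]. apply Hmin; lia.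
    + exists (S n); split; [lia|]; intros y Hy.
      destruct (Nat.eq_dec y (S n)) as [->|]; [lra|].
      assert (f x <= f y) by (apply Hmin; lia). lra.
Qed.

Lemma finite_argmax n (f : nat -> R) : (0 < n)%nat ->
  exists x, (x < n)%nat /\ forall y, (y < n)%nat -> f y <= f x.
Proof.
  intros Hn. destruct (finite_argmin n (fun x => - f x) Hn) as [x [Hx Hmin]].
  exists x; split; auto. intros y Hy; specialize (Hmin y Hy); lra.
Qed.

Lemma dot_ext m th a b : (forall i, (i < m)%nat -> a i = b i) -> dot m th a = dot m th b.
Proof. intros Hab; apply fsum_ext; intros i Hi; rewrite Hab; auto. Qed.

Lemma dot_lin_r m th a b c d :
  dot m th (fun i => c * a i + d * b i) = c * dot m th a + d * dot m th b.
Proof.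
  unfold dot. rewrite <- !fsum_scal, <- fsum_plus. apply fsum_ext; intros; ring.
Qed.

Lemma dot_scal_l m t th a : dot m (fun i => t * th i) a = t * dot m th a.
Proof. unfold dot. rewrite <- fsum_scal. apply fsum_ext; intros; ring. Qed.

Lemma dot_sub_r m th a b : dot m th (fun i => a i - b i) = dot m th a - dot m th b.
Proof.
  rewrite (dot_ext m th _ (fun i => 1 * a i + (-1) * b i)) by (intros; ring).
  rewrite dot_lin_r. ring.
Qed.

Lemma dot_extend m th t w :
  dot (S m) (fun k => if Nat.eq_dec k m then t else th k) w = dot m th w + t * w m.
Proof.
  unfold dot; simpl. destruct (Nat.eq_dec m m) as [_|]; [|congruence].
  f_equal. apply fsum_ext; intros i Hi. destruct (Nat.eq_dec i m); [lia|auto].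
Qed.

(** * Gordan's theorem of the alternative *)

Definition vec := nat -> R.

Inductive PosComb (l : list vec) : vec -> R -> Prop :=
| PosComb_nil : PosComb l (fun _ => 0) 0
| PosComb_add v s w c : PosComb l v s -> In w l -> 0 <= c ->
    PosComb l (fun k => v k + c * w k) (s + c).

Lemma PosComb_nonneg l v s : PosComb l v s -> 0 <= s.
Proof. induction 1; lra. Qed.

(* Fourier-Motzkin elimination of coordinate m: keep the vectors with zero
   m-th coordinate and add, for every pair wi, wj with positive resp. negative
   m-th coordinate, the combination of the two cancelling that coordinate. *)
Definition is_pos m (w : vec) : bool := if Rlt_dec 0 (w m) then true else false.
Definition is_neg m (w : vec) : bool := if Rlt_dec (w m) 0 then true else false.
Definition is_zero m (w : vec) : bool := if Req_EM_T (w m) 0 then true else false.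

Lemma is_pos_spec m w : is_pos m w = true <-> 0 < w m.
Proof. unfold is_pos; destruct (Rlt_dec 0 (w m)); split; easy. Qed.
Lemma is_neg_spec m w : is_neg m w = true <-> w m < 0.
Proof. unfold is_neg; destruct (Rlt_dec (w m) 0); split; easy. Qed.
Lemma is_zero_spec m w : is_zero m w = true <-> w m = 0.
Proof. unfold is_zero; destruct (Req_EM_T (w m) 0); split; easy. Qed.

Definition cancel_comb m (wi wj : vec) : vec := fun k => (- wj m) * wi k + wi m * wj k.

Definition FM m (l : list vec) : list vec :=
  filter (is_zero m) l ++
  flat_map (fun wi => map (fun wj => cancel_comb m wi wj) (filter (is_neg m) l))
           (filter (is_pos m) l).

Lemma in_FM_zero m l w : In w l -> w m = 0 -> In w (FM m l).
Proof. intros. apply in_or_app; left; apply filter_In; rewrite is_zero_spec; auto. Qed.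

Lemma in_FM_comb m l wi wj : In wi l -> 0 < wi m -> In wj l -> wj m < 0 ->
  In (cancel_comb m wi wj) (FM m l).
Proof.
  intros. apply in_or_app; right. apply in_flat_map. exists wi; split.
  - apply filter_In; rewrite is_pos_spec; auto.
  - apply in_map; apply filter_In; rewrite is_neg_spec; auto.
Qed.

Lemma in_FM_inv m l w : In w (FM m l) ->
  (In w l /\ w m = 0) \/
  exists wi wj, In wi l /\ 0 < wi m /\ In wj l /\ wj m < 0 /\ w = cancel_comb m wi wj.
Proof.
  intros Hw. apply in_app_or in Hw as [Hz|Hc].
  - left. apply filter_In in Hz as [? Hz]. apply is_zero_spec in Hz; auto.
  - right. apply in_flat_map in Hc as [wi [Hi Hj]]. apply in_map_iff in Hj as [wj [<- Hj]].
    apply filter_In in Hi as [? Hi]; apply filter_In in Hj as [? Hj].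
    apply is_pos_spec in Hi; apply is_neg_spec in Hj. exists wi, wj; auto.
Qed.

Lemma FM_lift m l v s : PosComb (FM m l) v s ->
  exists v' s', PosComb l v' s' /\ (forall k, (k < m)%nat -> v' k = v k) /\ v' m = 0 /\
    (0 < s -> 0 < s').
Proof.
  induction 1 as [|v s w c Hv IH Hw Hc].
  - exists (fun _ => 0), 0; repeat split; [constructor|lra].
  - destruct IH as [v' [s' [Hv' [Hk [Hm Hs']]]]].
    pose proof (PosComb_nonneg _ _ _ Hv). pose proof (PosComb_nonneg _ _ _ Hv').
    destruct (in_FM_inv m l w Hw) as [[Hwl Hw0]|[wi [wj [Hi [Hip [Hj [Hjn ->]]]]]]].
    + exists (fun k => v' k + c * w k), (s' + c). repeat split.
      * constructor; auto.
      * intros k Hk'. rewrite Hk; auto.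
      * rewrite Hm, Hw0; ring.
      * intros Hpos. destruct (Rlt_le_dec 0 s); [specialize (Hs' r)|]; lra.
    + assert (Hci : 0 <= c * - wj m) by (apply Rmult_le_pos; lra).
      assert (Hcj : 0 <= c * wi m) by (apply Rmult_le_pos; lra).
      exists (fun k => (v' k + (c * - wj m) * wi k) + (c * wi m) * wj k),
        (s' + c * - wj m + c * wi m). repeat split.
      * apply PosComb_add; [apply PosComb_add|..]; auto.
      * intros k Hk'. rewrite Hk; auto. unfold cancel_comb; ring.
      * rewrite Hm; ring.
      * intros Hpos. destruct (Rlt_le_dec 0 s); [specialize (Hs' r); lra|].
        assert (0 < c * wi m) by (apply Rmult_lt_0_compat; lra). lra.
Qed.

Lemma list_argmax (A : Type) (f : A -> R) l : l <> nil ->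
  exists a, In a l /\ forall b, In b l -> f b <= f a.
Proof.
  induction l as [|a l IH]; intros Hl; [congruence|]. destruct l as [|a' l].
  - exists a; split; [left; auto|]; intros b [->|[]]; lra.
  - destruct IH as [b0 [Hb0 Hm]]; [congruence|].
    destruct (Rle_dec (f a) (f b0)).
    + exists b0; split; [right; auto|]. intros b [<-|Hb]; auto.
    + exists a; split; [left; auto|]. intros b [<-|Hb]; [lra|]. specialize (Hm b Hb); lra.
Qed.

Lemma separate_bounds (A : Type) (Ls Us : list A) (lo up : A -> R) :
  (forall a b, In a Ls -> In b Us -> lo a < up b) ->
  exists t, (forall a, In a Ls -> lo a < t) /\ (forall b, In b Us -> t < up b).
Proof.
  intros Hsep.
  destruct Ls as [|a0 Ls']; [|destruct (list_argmax A lo (a0 :: Ls')) as [a [Ha Hm]]; [congruence|]];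
  (destruct Us as [|b0 Us'];
   [|destruct (list_argmax A (fun b => - up b) (b0 :: Us')) as [b [Hb Hm']]; [congruence|]]).
  - exists 0; split; intros _ [].
  - exists (up b - 1); split; [intros _ []|]. intros b' Hb'; specialize (Hm' b' Hb'); lra.
  - exists (lo a + 1); split; [|intros _ []]. intros a' Ha'; specialize (Hm a' Ha'); lra.
  - specialize (Hsep a b Ha Hb). exists ((lo a + up b) / 2); split.
    + intros a' Ha'; specialize (Hm a' Ha'); lra.
    + intros b' Hb'; specialize (Hm' b' Hb'); lra.
Qed.

Lemma affine_neg_pos d a t : 0 < a -> t < - d / a -> d + t * a < 0.
Proof.
  intros Ha Ht. apply (Rmult_lt_compat_r a) in Ht; auto.
  replace (- d / a * a) with (- d) in Ht by (field; lra). lra.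
Qed.

Lemma affine_neg_neg d a t : a < 0 -> - d / a < t -> d + t * a < 0.
Proof.
  intros Ha Ht. apply (Rmult_lt_compat_r (- a)) in Ht; [|lra].
  replace (- d / a * - a) with d in Ht by (field; lra). lra.
Qed.

Lemma FM_extend m l th : (forall w, In w (FM m l) -> dot m th w < 0) ->
  exists th', forall w, In w l -> dot (S m) th' w < 0.
Proof.
  intros Hth. set (ratio := fun w : vec => - dot m th w / w m).
  destruct (separate_bounds vec (filter (is_neg m) l) (filter (is_pos m) l) ratio ratio)
    as [t [Hlo Hup]].
  { intros wj wi Hj Hi.
    apply filter_In in Hi as [Hil Hi]; apply filter_In in Hj as [Hjl Hj].
    apply is_pos_spec in Hi; apply is_neg_spec in Hj.
    specialize (Hth _ (in_FM_comb m l wi wj Hil Hi Hjl Hj)).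
    unfold cancel_comb in Hth; rewrite dot_lin_r in Hth.
    assert (Hdiff : ratio wj - ratio wi
                    = (- wj m * dot m th wi + wi m * dot m th wj) / (wi m * - wj m))
      by (unfold ratio; field; lra).
    assert (0 < wi m * - wj m) by (apply Rmult_lt_0_compat; lra).
    assert (Hneg : (- wj m * dot m th wi + wi m * dot m th wj) / (wi m * - wj m) < 0).
    { apply Rdiv_neg_pos; auto. }
    lra. }
  exists (fun k => if Nat.eq_dec k m then t else th k). intros w Hw. rewrite dot_extend.
  destruct (Rlt_dec 0 (w m)) as [Hp|Hp]; [|destruct (Rlt_dec (w m) 0) as [Hn|Hn]].
  - apply affine_neg_pos; auto. apply Hup, filter_In. rewrite is_pos_spec; auto.
  - apply affine_neg_neg; auto. apply Hlo, filter_In. rewrite is_neg_spec; auto.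
  - assert (Hz : w m = 0) by lra. specialize (Hth w (in_FM_zero m l w Hw Hz)).
    rewrite Hz; lra.
Qed.

Lemma gordan m : forall l : list vec,
  ~ (exists th : vec, forall w, In w l -> dot m th w < 0) ->
  exists v s, PosComb l v s /\ 0 < s /\ forall i, (i < m)%nat -> v i = 0.
Proof.
  induction m as [|m IH]; intros l Hn.
  - destruct l as [|w l].
    + exfalso; apply Hn; exists (fun _ => 0); intros _ [].
    + exists (fun k => 0 + 1 * w k), (0 + 1). repeat split; [|lra|intros; lia].
      constructor; [constructor|left; auto|lra].
  - destruct (IH (FM m l)) as [v [s [Hv [Hs Hv0]]]].
    + intros [th Hth]. apply Hn. apply (FM_extend m l th Hth).
    + destruct (FM_lift m l v s Hv) as [v' [s' [Hv' [Hk [Hm Hs']]]]].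
      exists v', s'; repeat split; auto.
      intros i Hi. destruct (Nat.eq_dec i m) as [->|]; auto.
      rewrite Hk by lia. apply Hv0; lia.
Qed.

Lemma PosComb_coefficients N (w : nat -> vec) v s :
  PosComb (map w (seq 0 N)) v s ->
  exists lam, (forall x, (x < N)%nat -> 0 <= lam x) /\ fsum N lam = s /\
    forall i, v i = fsum N (fun x => lam x * w x i).
Proof.
  induction 1 as [|v s w' c Hv IH Hw Hc].
  - exists (fun _ => 0); repeat split; [intros; lra| apply fsum_zero|].
    intros i. rewrite (fsum_ext _ _ (fun _ => 0)), fsum_zero; auto. intros; ring.
  - destruct IH as [lam [Hlam [Hsum Hcomb]]].
    apply in_map_iff in Hw as [x0 [<- Hx0]]. apply in_seq in Hx0.
    exists (fun x => lam x + (if Nat.eq_dec x x0 then c else 0) * 1). repeat split.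
    + intros x Hx; specialize (Hlam x Hx); destruct (Nat.eq_dec x x0); lra.
    + rewrite fsum_plus, fsum_delta by lia. rewrite Hsum; ring.
    + intros i. rewrite Hcomb.
      rewrite (fsum_ext N (fun x => (lam x + (if Nat.eq_dec x x0 then c else 0) * 1) * w x i)
                 (fun x => lam x * w x i + (if Nat.eq_dec x x0 then c else 0) * w x i))
        by (intros; ring).
      rewrite fsum_plus, fsum_delta by lia. ring.
Qed.

(** * The phi-logarithm and the phi-exponential *)

Lemma continuity_pt_of_eps_delta f x :
  (forall eps, 0 < eps -> exists d, 0 < d /\
     forall z, Rabs (z - x) < d -> Rabs (f z - f x) < eps) ->
  continuity_pt f x.
Proof.
  intros Hf eps He. destruct (Hf eps He) as [d [Hd Hz]]. exists d; split; auto.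
  intros z [_ Hz']. apply Hz, Hz'.
Qed.

Section PhiLogarithm.
Variable phi : R -> R.
Hypothesis Hphi : admissible_phi phi.

Lemma phi_pos y : 0 < y -> 0 < phi y.
Proof. destruct Hphi as [H _]; auto. Qed.

Lemma phi_le y z : 0 < y -> y <= z -> phi y <= phi z.
Proof. destruct Hphi as [_ [Hlt _]]. intros Hy [Hyz| ->]; [left; auto|lra]. Qed.

Lemma inv_phi_le y z : 0 < y -> y <= z -> / phi z <= / phi y.
Proof. intros. apply Rinv_le_contravar; [apply phi_pos|apply phi_le]; auto. Qed.

(* Absolute continuity on [y/2, 2y], applied to a single interval, gives
   continuity of phi at y. *)
Lemma phi_continuous y : 0 < y -> continuity_pt phi y.
Proof.
  intros Hy. destruct Hphi as [_ [_ [Hac _]]].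
  specialize (Hac (y/2) (2*y) ltac:(lra) ltac:(lra)).
  apply continuity_pt_of_eps_delta. intros eps He.
  destruct (Hac eps He) as [d [Hd Hl]].
  exists (Rmin d (y/2)); split; [apply Rmin_glb_lt; lra|].
  intros z Hz. pose proof (Rmin_l d (y/2)). pose proof (Rmin_r d (y/2)).
  destruct (Rle_dec y z).
  - rewrite Rabs_right in Hz by lra.
    specialize (Hl ((y,z)::nil)); simpl in Hl.
    assert (Rabs (phi z - phi y) + 0 < eps); [|lra].
    apply Hl; [repeat split; lra| |lra]. intros Iv [<-|[]]; simpl; lra.
  - rewrite Rabs_left in Hz by lra. rewrite Rabs_minus_sym.
    specialize (Hl ((z,y)::nil)); simpl in Hl.
    assert (Rabs (phi y - phi z) + 0 < eps); [|lra].
    apply Hl; [repeat split; lra| |lra]. intros Iv [<-|[]]; simpl; lra.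
Qed.

Lemma inv_phi_integrable a b : 0 < a -> 0 < b -> Riemann_integrable (fun y => / phi y) a b.
Proof.
  assert (Hc : forall y, 0 < y -> continuity_pt (fun y => / phi y) y).
  { intros y Hy. apply continuity_pt_inv; [apply phi_continuous; auto|].
    apply Rgt_not_eq, phi_pos; auto. }
  intros Ha Hb. destruct (Rle_dec a b).
  - apply continuity_implies_RiemannInt; auto. intros; apply Hc; lra.
  - apply RiemannInt_P1, continuity_implies_RiemannInt; [lra|]. intros; apply Hc; lra.
Qed.

Lemma integral_RiemannInt f a b (pr : Riemann_integrable f a b) : integral f a b = RiemannInt pr.
Proof.
  unfold integral.
  destruct (epsilon_spec (inhabits 0) (fun I => exists pr, RiemannInt pr = I)
    (ex_intro _ (RiemannInt pr) (ex_intro _ pr eq_refl))) as [pr' <-].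
  apply RiemannInt_P5.
Qed.

Lemma ln_phi_RiemannInt v (Hv : 0 < v) :
  ln_phi phi v = RiemannInt (inv_phi_integrable 1 v ltac:(lra) Hv).
Proof. apply integral_RiemannInt. Qed.

Lemma ln_phi_1 : ln_phi phi 1 = 0.
Proof.
  rewrite (ln_phi_RiemannInt 1 ltac:(lra)). apply RiemannInt_P9.
Qed.

(* Since 1/phi is decreasing, ln_phi b - ln_phi a lies between
   (b - a)/phi(b) and (b - a)/phi(a). *)
Lemma ln_phi_increment a b (Ha : 0 < a) (Hab : a <= b) :
  (b - a) * / phi b <= ln_phi phi b - ln_phi phi a <= (b - a) * / phi a.
Proof.
  assert (Hb : 0 < b) by lra.
  set (pr := inv_phi_integrable a b Ha Hb).
  assert (Hdiff : ln_phi phi b - ln_phi phi a = RiemannInt pr).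
  { rewrite (ln_phi_RiemannInt b Hb), (ln_phi_RiemannInt a Ha).
    rewrite <- (RiemannInt_P26 (inv_phi_integrable 1 a ltac:(lra) Ha) pr). ring. }
  rewrite Hdiff. split.
  - rewrite Rmult_comm, <- (RiemannInt_P15 (RiemannInt_P14 a b (/ phi b))).
    apply RiemannInt_P19; auto. intros x Hx. apply inv_phi_le; lra.
  - rewrite Rmult_comm, <- (RiemannInt_P15 (RiemannInt_P14 a b (/ phi a))).
    apply RiemannInt_P19; auto. intros x Hx. apply inv_phi_le; lra.
Qed.

Lemma ln_phi_lt a b : 0 < a -> a < b -> ln_phi phi a < ln_phi phi b.
Proof.
  intros Ha Hab. pose proof (ln_phi_increment a b Ha ltac:(lra)).
  assert (0 < (b - a) * / phi b)
    by (apply Rmult_lt_0_compat; [lra|apply Rinv_0_lt_compat, phi_pos; lra]).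
  lra.
Qed.

Lemma ln_phi_le a b : 0 < a -> a <= b -> ln_phi phi a <= ln_phi phi b.
Proof. intros Ha [Hab| ->]; [left; apply ln_phi_lt|]; auto; lra. Qed.

Lemma ln_phi_lipschitz c a b : 0 < c -> c <= a -> c <= b ->
  Rabs (ln_phi phi b - ln_phi phi a) <= / phi c * Rabs (b - a).
Proof.
  intros Hc Ha Hb.
  assert (Hbound : forall x y, c <= x -> x <= y ->
            Rabs (ln_phi phi y - ln_phi phi x) <= / phi c * Rabs (y - x)).
  { intros x y Hx Hxy. pose proof (ln_phi_increment x y ltac:(lra) Hxy) as [Hlo Hhi].
    assert (0 <= (y - x) * / phi y)
      by (apply Rmult_le_pos; [lra|left; apply Rinv_0_lt_compat, phi_pos; lra]).
    assert ((y - x) * / phi x <= (y - x) * / phi c)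
      by (apply Rmult_le_compat_l; [lra|apply inv_phi_le; lra]).
    rewrite !Rabs_right by lra. lra. }
  destruct (Rle_dec a b); [apply Hbound; lra|].
  rewrite Rabs_minus_sym, (Rabs_minus_sym b a). apply Hbound; lra.
Qed.

Lemma ln_phi_unbounded_above u : exists v, 0 < v /\ u < ln_phi phi v.
Proof.
  destruct Hphi as [_ [_ [_ [_ H]]]]. destruct (H u) as [v [Hv Hi]].
  exists v; split; [lra|exact Hi].
Qed.

Lemma ln_phi_unbounded_below u : exists v, 0 < v /\ ln_phi phi v < u.
Proof.
  destruct Hphi as [_ [_ [_ [H _]]]]. destruct (H (- u)) as [v [Hv [Hv1 Hi]]].
  exists v; split; auto.
  rewrite (ln_phi_RiemannInt v Hv).
  rewrite (integral_RiemannInt _ v 1 (inv_phi_integrable v 1 Hv ltac:(lra))) in Hi.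
  rewrite (RiemannInt_P8 _ (inv_phi_integrable v 1 Hv ltac:(lra))). lra.
Qed.

Lemma Rmax_lipschitz c z x : Rabs (Rmax c z - Rmax c x) <= Rabs (z - x).
Proof. unfold Rmax. destruct (Rle_dec c z), (Rle_dec c x); unfold Rabs; repeat destruct Rcase_abs; lra. Qed.

(* ln_phi is a bijection (0, +oo) -> R: surjectivity by the intermediate
   value theorem applied to the continuous extension x |-> ln_phi (max c x). *)
Lemma ln_phi_surjective u : exists v, 0 < v /\ ln_phi phi v = u.
Proof.
  destruct (ln_phi_unbounded_below u) as [v1 [Hv1 Hl1]].
  destruct (ln_phi_unbounded_above u) as [v2 [Hv2 Hl2]].
  assert (Hlt : v1 < v2).
  { destruct (Rlt_le_dec v1 v2); auto. pose proof (ln_phi_le v2 v1 Hv2 r). lra. }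
  set (h := fun x => ln_phi phi (Rmax v1 x) - u).
  assert (Hc : continuity h).
  { intros x. apply continuity_pt_of_eps_delta. intros eps He.
    assert (HL : 0 < / phi v1) by (apply Rinv_0_lt_compat, phi_pos; auto).
    exists (eps / / phi v1); split; [apply Rdiv_lt_0_compat; auto|].
    intros z Hz. unfold h.
    replace (ln_phi phi (Rmax v1 z) - u - (ln_phi phi (Rmax v1 x) - u))
      with (ln_phi phi (Rmax v1 z) - ln_phi phi (Rmax v1 x)) by ring.
    eapply Rle_lt_trans; [apply (ln_phi_lipschitz v1); auto; apply Rmax_l|].
    eapply Rle_lt_trans; [apply Rmult_le_compat_l; [lra|apply Rmax_lipschitz]|].
    pose proof (phi_pos v1 Hv1).
    replace eps with (/ phi v1 * (eps / / phi v1)) by (field; lra).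
    apply Rmult_lt_compat_l; auto. }
  destruct (IVT h v1 v2 Hc Hlt) as [z [Hz Hh]].
  - unfold h. rewrite Rmax_left by lra. lra.
  - unfold h. rewrite Rmax_right by lra. lra.
  - exists z; split; [lra|]. unfold h in Hh. rewrite Rmax_right in Hh by lra. lra.
Qed.

Lemma exp_phi_spec u : 0 < exp_phi phi u /\ ln_phi phi (exp_phi phi u) = u.
Proof. unfold exp_phi. apply epsilon_spec, ln_phi_surjective. Qed.

Lemma exp_phi_pos u : 0 < exp_phi phi u.
Proof. apply exp_phi_spec. Qed.

Lemma ln_phi_exp_phi u : ln_phi phi (exp_phi phi u) = u.
Proof. apply exp_phi_spec. Qed.

Lemma exp_phi_lt a u : 0 < a -> u < ln_phi phi a -> exp_phi phi u < a.
Proof.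
  intros Ha Hu. destruct (Rlt_le_dec (exp_phi phi u) a) as [|Hle]; auto.
  pose proof (ln_phi_le a _ Ha Hle). rewrite ln_phi_exp_phi in *. lra.
Qed.

Lemma exp_phi_gt a u : 0 < a -> ln_phi phi a < u -> a < exp_phi phi u.
Proof.
  intros Ha Hu. destruct (Rlt_le_dec a (exp_phi phi u)) as [|Hle]; auto.
  pose proof (ln_phi_le _ a (exp_phi_pos u) Hle). rewrite ln_phi_exp_phi in *. lra.
Qed.

Lemma le_ln_phi_of_exp_phi_le a u : exp_phi phi u <= a -> u <= ln_phi phi a.
Proof.
  intros Hle. pose proof (ln_phi_le _ a (exp_phi_pos u) Hle). rewrite ln_phi_exp_phi in *. auto.
Qed.

(* exp_phi is continuous: it is increasing and maps every neighbourhood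
   (ln_phi(v-e), ln_phi(v+e)) of u onto (v-e, v+e), where v = exp_phi u. *)
Lemma exp_phi_continuous : continuity (exp_phi phi).
Proof.
  intros u. apply continuity_pt_of_eps_delta. intros eps He.
  set (v := exp_phi phi u). assert (Hv : 0 < v) by apply exp_phi_pos.
  set (e := Rmin eps (v/2)). assert (He1 : 0 < e) by (apply Rmin_glb_lt; lra).
  assert (He2 : e <= v/2) by apply Rmin_r. assert (He3 : e <= eps) by apply Rmin_l.
  assert (Hl1 : ln_phi phi (v - e) < u).
  { rewrite <- (ln_phi_exp_phi u). apply ln_phi_lt; fold v; lra. }
  assert (Hl2 : u < ln_phi phi (v + e)).
  { rewrite <- (ln_phi_exp_phi u) at 1. apply ln_phi_lt; fold v; lra. }
  exists (Rmin (u - ln_phi phi (v - e)) (ln_phi phi (v + e) - u)); split;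
    [apply Rmin_glb_lt; lra|].
  intros z Hz. apply Rabs_def2 in Hz as [Hz1 Hz2].
  pose proof (Rmin_l (u - ln_phi phi (v - e)) (ln_phi phi (v + e) - u)).
  pose proof (Rmin_r (u - ln_phi phi (v - e)) (ln_phi phi (v + e) - u)).
  assert (v - e < exp_phi phi z) by (apply exp_phi_gt; lra).
  assert (exp_phi phi z < v + e) by (apply exp_phi_lt; lra).
  apply Rabs_def1; fold v; lra.
Qed.

End PhiLogarithm.

Lemma polytope_of_no_separator N m (H : nat -> nat -> R) (eta : vec) :
  ~ (exists th : vec, forall x, (x < N)%nat -> dot m th (H x) - dot m th eta < 0) ->
  in_marginal_polytope N m H eta.
Proof.
  intros Hnosep. set (w := fun x i => H x i - eta i).
  destruct (gordan m (map w (seq 0 N))) as [v [s [Hv [Hs Hv0]]]].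
  { intros [th Hth]. apply Hnosep. exists th. intros x Hx.
    rewrite <- dot_sub_r. apply (Hth (w x)), in_map, in_seq; lia. }
  destruct (PosComb_coefficients N w v s Hv) as [lam [Hlam [Hsum Hcomb]]].
  exists (fun x => lam x / s). repeat split.
  - intros x Hx. specialize (Hlam x Hx).
    apply Rmult_le_pos; [lra|left; apply Rinv_0_lt_compat; lra].
  - unfold Rdiv. rewrite (fsum_ext _ _ (fun x => / s * lam x)) by (intros; ring).
    rewrite fsum_scal, Hsum. field; lra.
  - intros i Hi. specialize (Hv0 i Hi). rewrite Hcomb in Hv0. unfold w in Hv0.
    rewrite (fsum_ext _ _ (fun x => lam x * H x i + (- eta i) * lam x)) in Hv0
      by (intros; ring).
    rewrite fsum_plus, fsum_scal, Hsum in Hv0.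
    unfold Rdiv. rewrite (fsum_ext _ _ (fun x => / s * (lam x * H x i))) by (intros; ring).
    rewrite fsum_scal. replace (fsum N (fun x => lam x * H x i)) with (eta i * s) by lra.
    field; lra.
Qed.

(** * The normalising function of a phi-exponential family *)

Section PhiFamily.
Variables (phi : R -> R) (N m : nat) (mu p : nat -> R) (H : nat -> nat -> R).
Hypothesis Hphi : admissible_phi phi.
Hypothesis Hmu : forall x, (x < N)%nat -> 0 < mu x.
Hypothesis Hp : forall x, (x < N)%nat -> 0 < p x.
Hypothesis Hsum : fsum N (fun x => p x * mu x) = 1.

Lemma sample_space_nonempty : (0 < N)%nat.
Proof. destruct N; simpl in Hsum; [lra|lia]. Qed.

Lemma weight_pos x : (x < N)%nat -> 0 < p x * mu x.
Proof. intros; apply Rmult_lt_0_compat; auto. Qed.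

Lemma expect_lt_1 f : (forall x, (x < N)%nat -> f x < 1) -> expect N p mu f < 1.
Proof.
  intros Hf. rewrite <- Hsum. apply fsum_lt; [apply sample_space_nonempty|].
  intros x Hx. rewrite Rmult_assoc. rewrite <- (Rmult_1_l (p x * mu x)) at 2.
  apply Rmult_lt_compat_r; [apply weight_pos|]; auto.
Qed.

Lemma expect_gt_1 f : (forall x, (x < N)%nat -> 1 < f x) -> 1 < expect N p mu f.
Proof.
  intros Hf. rewrite <- Hsum. apply fsum_lt; [apply sample_space_nonempty|].
  intros x Hx. rewrite Rmult_assoc. rewrite <- (Rmult_1_l (p x * mu x)) at 1.
  apply Rmult_lt_compat_r; [apply weight_pos|]; auto.
Qed.

Lemma normalizer_continuous (c : nat -> R) :
  continuity (fun a => expect N p mu (fun x => exp_phi phi (c x - a))).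
Proof.
  assert (Hcst : forall k, continuity (fun _ : R => k))
    by (intros k a; apply continuity_pt_const; intros ? ?; reflexivity).
  unfold expect. generalize N. intros n a. induction n as [|n IH]; simpl.
  - apply Hcst.
  - apply continuity_pt_plus; [apply IH|].
    apply continuity_pt_mult; [apply continuity_pt_mult|apply Hcst]; [|apply Hcst].
    apply (continuity_pt_comp (fun a => c n - a) (exp_phi phi)).
    + apply continuity_pt_minus; [apply Hcst|apply derivable_continuous_pt, derivable_pt_id].
    + apply exp_phi_continuous; auto.
Qed.

(* alpha(theta) does normalise the family: by the intermediate value theorem
   some shift a gives expectation 1, since a below min theta.H makes every
   exp_phi(theta.H(x) - a) exceed 1 and a above max theta.H makes all of them
   smaller than 1. *)
Lemma alpha_normalizes theta :
  expect N p mu (fun x => exp_phi phi (dot m theta (H x) - alpha phi N m p mu H theta)) = 1.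
Proof.
  unfold alpha. apply epsilon_spec.
  set (c := fun x => dot m theta (H x)).
  set (F := fun a => expect N p mu (fun x => exp_phi phi (c x - a))).
  destruct (finite_argmin N c sample_space_nonempty) as [x0 [Hx0 Hmin]].
  destruct (finite_argmax N c sample_space_nonempty) as [x1 [Hx1 Hmax]].
  assert (Hcont : continuity (fun a => 1 - F a)).
  { apply continuity_minus; [intros a; apply continuity_pt_const; intros ? ?; reflexivity|].
    apply normalizer_continuous. }
  assert (HF0 : 1 < F (c x0 - 1)).
  { apply expect_gt_1. intros x Hx. specialize (Hmin x Hx).
    apply exp_phi_gt; auto; [lra|rewrite ln_phi_1; auto; lra]. }
  assert (HF1 : F (c x1 + 1) < 1).
  { apply expect_lt_1. intros x Hx. specialize (Hmax x Hx).
    apply exp_phi_lt; auto; [lra|rewrite ln_phi_1; auto; lra]. }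
  assert (Hx01 : c x0 <= c x1) by auto.
  destruct (IVT (fun a => 1 - F a) (c x0 - 1) (c x1 + 1) Hcont ltac:(lra) ltac:(lra) ltac:(lra))
    as [a [_ Ha]].
  exists a. unfold F, c in Ha. lra.
Qed.

(* Each score theta.H(x) - alpha(theta) is bounded independently of theta,
   because its term in the normalisation sum is at most 1. *)
Lemma score_bounded theta x : (x < N)%nat ->
  dot m theta (H x) - alpha phi N m p mu H theta <= ln_phi phi (/ (p x * mu x)).
Proof.
  intros Hx. set (s := dot m theta (H x) - alpha phi N m p mu H theta).
  pose proof (weight_pos x Hx) as Hw.
  assert (Hterm : exp_phi phi s * p x * mu x <= 1).
  { rewrite <- (alpha_normalizes theta). unfold expect, s.
    apply (fsum_term N (fun y => exp_phi phi (dot m theta (H y) - alpha phi N m p mu H theta)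
                                 * p y * mu y)); auto.
    intros y Hy. rewrite Rmult_assoc.
    apply Rmult_le_pos; [left; apply exp_phi_pos|left; apply weight_pos]; auto. }
  apply le_ln_phi_of_exp_phi_le; auto.
  apply (Rmult_le_reg_r (p x * mu x)); auto.
  rewrite Rinv_l, <- Rmult_assoc by lra. auto.
Qed.

(* Some score is nonnegative: otherwise the normalisation sum would be < 1. *)
Lemma some_score_nonneg theta :
  exists x, (x < N)%nat /\ alpha phi N m p mu H theta <= dot m theta (H x).
Proof.
  apply NNPP; intros Hnone.
  apply (Rlt_irrefl 1). rewrite <- (alpha_normalizes theta) at 1.
  apply expect_lt_1. intros x Hx. apply exp_phi_lt; auto; [lra|].
  rewrite ln_phi_1 by auto.
  destruct (Rlt_le_dec (dot m theta (H x) - alpha phi N m p mu H theta) 0); auto.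
  exfalso; apply Hnone; exists x; split; auto; lra.
Qed.

(* On M, theta.eta - alpha(theta) is a convex combination of bounded scores. *)
Lemma conjugate_bounded_on_polytope eta : in_marginal_polytope N m H eta ->
  exists B, forall theta, dot m theta eta - alpha phi N m p mu H theta <= B.
Proof.
  intros [lam [Hlam [Hlam1 Heta]]].
  destruct (finite_argmax N (fun x => ln_phi phi (/ (p x * mu x))) sample_space_nonempty)
    as [x1 [Hx1 Hmax]].
  exists (ln_phi phi (/ (p x1 * mu x1))). intros theta.
  set (a := alpha phi N m p mu H theta).
  assert (Hcomb : dot m theta eta - a = fsum N (fun x => lam x * (dot m theta (H x) - a))).
  { assert (Heta_dot : dot m theta eta = fsum N (fun x => lam x * dot m theta (H x))).
    { unfold dot.
      rewrite (fsum_ext m _ (fun i => fsum N (fun x => theta i * (lam x * H x i))))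
        by (intros i Hi; rewrite Heta, <- fsum_scal; auto).
      rewrite fsum_swap. apply fsum_ext. intros x Hx.
      rewrite <- fsum_scal. apply fsum_ext; intros; ring. }
    rewrite (fsum_ext _ _ (fun x => lam x * dot m theta (H x) + (- a) * lam x))
      by (intros; ring).
    rewrite fsum_plus, fsum_scal, Hlam1, Heta_dot. ring. }
  rewrite Hcomb, <- (Rmult_1_r (ln_phi phi _)), <- Hlam1, <- fsum_scal.
  apply fsum_le. intros x Hx. rewrite Rmult_comm.
  apply Rmult_le_compat_r; auto.
  eapply Rle_trans; [apply score_bounded|apply Hmax]; auto.
Qed.

(* Along a strictly separating direction theta, the value at t theta grows at
   least like t min_x theta.(eta - H(x)). *)
Lemma conjugate_unbounded_of_separator eta th :
  (forall x, (x < N)%nat -> dot m th (H x) - dot m th eta < 0) ->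
  forall B, exists theta, B < dot m theta eta - alpha phi N m p mu H theta.
Proof.
  intros Hsep B.
  destruct (finite_argmin N (fun x => dot m th eta - dot m th (H x)) sample_space_nonempty)
    as [x0 [Hx0 Hmin]].
  set (d := dot m th eta - dot m th (H x0)) in *.
  assert (Hd : 0 < d) by (specialize (Hsep x0 Hx0); unfold d; lra).
  set (t := (Rabs B + 1) / d).
  assert (Ht : 0 < t) by (apply Rdiv_lt_0_compat; [pose proof (Rabs_pos B)|]; lra).
  exists (fun i => t * th i).
  destruct (some_score_nonneg (fun i => t * th i)) as [x [Hx Hscore]].
  rewrite dot_scal_l in *.
  assert (t * d <= t * (dot m th eta - dot m th (H x)))
    by (apply Rmult_le_compat_l; [lra|apply Hmin; auto]).
  assert (t * d = Rabs B + 1) by (unfold t; field; lra).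
  pose proof (Rle_abs B). lra.
Qed.

End PhiFamily.

Theorem theorem1 (phi : R -> R) (N m : nat) (mu p : nat -> R)
    (H : nat -> nat -> R) (eta : nat -> R) :
  admissible_phi phi ->
  (forall x, (x < N)%nat -> 0 < mu x) ->
  (forall x, (x < N)%nat -> 0 < p x) ->
  fsum N (fun x => p x * mu x) = 1 ->
  ((exists B : R, forall theta : nat -> R,
       dot m theta eta - alpha phi N m p mu H theta <= B)
   <-> in_marginal_polytope N m H eta).
Proof.
  intros Hphi Hmu Hp Hsum. split.
  - intros [B HB]. apply polytope_of_no_separator. intros [th Hsep].
    destruct (conjugate_unbounded_of_separator phi N m mu p H Hphi Hmu Hp Hsum eta th Hsep B)
      as [theta Htheta].
    specialize (HB theta). lra.
  - apply conjugate_bounded_on_polytope; auto.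
Qed.
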